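(* Let $H$ be a subdirect product of $H_1 \times H_2$ with projections $\pi_1\colon H \to H_1$ and $\pi_2\colon H \to H_2$. Assume that $N$ is a soluble normal subgroup of $H$ such that $H/N \cong T^\ell$, where $T$ is a nonabelian simple group and $\ell$ is a positive integer. Then there exist integers $\ell_1, \ell_2 \geq 0$ with $\ell_1 + \ell_2 \geq \ell$ such that $H_1/N\pi_1 \cong T^{\ell_1}$ and $H_2/N\pi_2 \cong T^{\ell_2}$.
   Context: $H$ is a subdirect product of $H_1\times H_2$ means $H \leq H_1\times H_2$ and both coordinate projections restricted to $H$ are surjective. $N\pi_i$ denotes the image of $N$ under $\pi_i$. *)

From mathcomp Require Import all_boot all_fingroup all_solvable.

From mathcomp Require Import all_boot all_fingroup all_solvable.
Set Implicit Arguments. Unset Strict Implicit. Unset Printing Implicit Defensive.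
Local Open Scope group_scope.

(* A normal subgroup M of a direct power T^I of a nonabelian simple group T
   is the product of the coordinate copies of T that it contains: if f \in M
   and f i != 1, then M meets the i-th copy nontrivially (otherwise f i would
   centralise T, but Z(T) = 1), hence contains it. So T^I / M is again a power
   of T, and abelian normal subgroups of T^I are trivial.
   Let K_j be the image in H/N ~ T^l of the kernel of the j-th projection, so
   that H_j / N pi_j ~ (H/N) / K_j ~ T^l_j. The two kernels centralise each
   other, hence K_1 :&: K_2 is abelian and normal, thus trivial, and
   |T|^l = |H/N| <= |(H/N)/K_1| |(H/N)/K_2| = |T|^(l_1 + l_2). *)

Lemma trivg_center_simple (gT : finGroupType) (T : {group gT}) :
  simple T -> ~~ abelian T -> 'Z(T) = 1.
Proof.
move=> /simpleP[_ simT] nabT; have [//|ZT] := simT _ (center_normal T).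
by case/negP: nabT; rewrite /abelian -{1}ZT subsetIr.
Qed.

Lemma commg_dfung1 (I : finType) (gT : I -> finGroupType)
    (f : {dffun forall i, gT i}) i (t : gT i) :
  [~ f, dfung1 (i := i) t] = dfung1 [~ f i, t].
Proof.
apply/ffunP => j; rewrite /commg /conjg !(mulg_ffun, invg_ffun).
have [<-|ij] := eqVneq i j; first by rewrite !dfung1_id.
by rewrite !dfung1_dflt // invg1 !mulg1 mul1g mulVg.
Qed.

Section DirectPower.

Variables (I : finType) (gT : finGroupType) (T : {group gT}).

Local Notation TI := (setXn (fun _ : I => T)).
Local Notation coord i := (@set1gXn I (fun _ => gT) i T).
Local Notation trivial_on C := (setXn (fun i => if i \in C then 1%G else T)).

Definition restr_coords (C : {set I}) (f : {dffun forall i : I, gT}) :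
  {dffun forall j : 'I_#|C|, gT} := [ffun j => f (enum_val j)].

Lemma restr_coords_morphM C : {morph restr_coords C : f g / f * g}.
Proof. by move=> f g; apply/ffunP => j; rewrite !ffunE. Qed.

Canonical restr_coords_morphism C :=
  @Morphism _ _ setT _ (in2W (restr_coords_morphM C)).

Lemma morphim_restr_coords (C : {set I}) :
  restr_coords C @* TI = setXn (fun _ : 'I_#|C| => T).
Proof.
rewrite morphimEsub ?subsetT //; apply/setP => g; apply/imsetP/setXnP.
  by case=> f /setXnP fT -> j; rewrite ffunE.
move=> gT_.
exists [ffun i => if [pick j | enum_val j == i] is Some j then g j else 1].
  by apply/setXnP => i; rewrite ffunE; case: pickP => [j _|_]; rewrite ?group1.
apply/ffunP => j; rewrite !ffunE.
by case: pickP => [j' /eqP/enum_val_inj -> //|/(_ j)]; rewrite eqxx.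
Qed.

Lemma ker_restr_coords (C : {set I}) : 'ker_TI (restr_coords C) = trivial_on C.
Proof.
apply/setP => f; rewrite !inE /=.
apply/andP/forallP => [[fT /eqP/ffunP f1] i|f1].
  case: ifPn => iC; last by move/forallP: fT.
  by move: (f1 (enum_rank_in iC i)); rewrite !ffunE enum_rankK_in // => ->.
split.
  by apply/forallP => i; move: (f1 i); case: ifP => // _ /set1P ->.
apply/eqP/ffunP => j; rewrite !ffunE; move: (f1 (enum_val j)).
by rewrite enum_valP => /set1P.
Qed.

Lemma quotient_trivial_on_isog (C : {set I}) :
  TI / trivial_on C \isog setXn (fun _ : 'I_#|C| => T).
Proof.
by rewrite -ker_restr_coords -morphim_restr_coords first_isog_loc ?subsetT.
Qed.

Hypotheses (simT : simple T) (nabT : ~~ abelian T).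

Lemma coord_subset_normal (M : {group {dffun forall i : I, gT}}) f i :
  M <| TI -> f \in M -> f i != 1 -> coord i \subset M.
Proof.
move=> nsM fM fi1.
have sXTI : coord i \subset TI.
  by rewrite set1gXnE; apply: setXnS => j; case: dfwithP; rewrite ?sub1G.
have /simpleP[_ simX] : simple (coord i).
  by rewrite -(isog_simple (isog_setXn _)).
have [XM1|<-] := simX _ (normalGI sXTI nsM); last exact: subsetIr.
have fiZ : f i \in 'Z(T).
  have fiT : f i \in T by apply: (setXnP (subsetP (normal_sub nsM) f fM)).
  rewrite inE fiT; apply/centP => t tT; apply/commgP.
  have tX : dfung1 (i := i) t \in coord i by apply/set1gXnP; exists t.
  have : [~ f, dfung1 (i := i) t] \in (coord i :&: M)%G.
    rewrite inE {1}commg_dfung1; apply/andP; split.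
      by apply/set1gXnP; exists [~ f i, t]; rewrite ?groupR.
    have /subsetP-> // : [~: M, coord i] \subset M.
      by rewrite commg_subl (subset_trans sXTI) ?normal_norm.
    by rewrite mem_commg.
  rewrite XM1 commg_dfung1 => /set1P/ffunP/(_ i).
  by rewrite dfung1_id oneg_ffun => ->.
by rewrite trivg_center_simple // inE (negbTE fi1) in fiZ.
Qed.

Lemma normal_setXnE (M : {group {dffun forall i : I, gT}}) :
  M <| TI -> M :=: trivial_on [set i | ~~ (coord i \subset M)].
Proof.
move=> nsM; apply/eqP; rewrite eqEsubset; apply/andP; split.
  apply/subsetP => f fM; apply/setXnP => i; rewrite inE.
  case: ifPn => [nXM|_]; last exact: (setXnP (subsetP (normal_sub nsM) f fM)).
  by apply/set1P/eqP; apply: contraR nXM; apply: coord_subset_normal.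
rewrite -setXn_prod; apply/prod_subG => i _; rewrite inE.
by case: ifPn => [_|/negbNE //]; rewrite -morphim_dfung1 morphim1 sub1G.
Qed.

Lemma quotient_normal_setXn_isog (M : {group {dffun forall i : I, gT}}) :
  M <| TI -> exists k, TI / M \isog setXn (fun _ : 'I_k => T).
Proof. by move/normal_setXnE->; eexists; apply: quotient_trivial_on_isog. Qed.

Lemma abelian_normal_setXn (M : {group {dffun forall i : I, gT}}) :
  M <| TI -> abelian M -> M :=: 1.
Proof.
move=> nsM abM; apply/trivgP/subsetP => f fM; apply/set1P/ffunP => i.
apply/eqP; rewrite oneg_ffun; apply: contraR nabT => fi1.
rewrite (isog_abelian (@isog_setXn I (fun=> gT) i T)).
exact: abelianS (coord_subset_normal nsM fM fi1) abM.
Qed.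

End DirectPower.

Section IsomorphicToPower.

Variables (rT gT : finGroupType) (I : finType) (Q : {group rT}) (T : {group gT}).
Hypotheses (simT : simple T) (nabT : ~~ abelian T).
Hypothesis isoQ : Q \isog setXn (fun _ : I => T).

Lemma quotient_isog_power (M : {group rT}) :
  M <| Q -> exists k, Q / M \isog setXn (fun _ : 'I_k => T).
Proof.
case/isogP: isoQ => phi injphi imphi nsM.
have nsMphi : phi @* M <| setXn (fun _ : I => T).
  by rewrite -imphi morphim_normal.
have [k isoM] := quotient_normal_setXn_isog simT nabT nsMphi.
exists k; apply: isog_trans isoM.
apply/isogP; exists (quotm_morphism phi nsM); first exact: injm_quotm.
by rewrite morphim_quotm imphi.
Qed.

Lemma abelian_normal_isog_power (M : {group rT}) :
  M <| Q -> abelian M -> M :=: 1.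
Proof.
case/isogP: isoQ => phi injphi imphi nsM abM; apply/eqP.
rewrite -(morphim_injm_eq1 injphi (normal_sub nsM)); apply/eqP.
apply: (abelian_normal_setXn simT nabT); last exact: morphim_abelian.
by rewrite -imphi morphim_normal.
Qed.

End IsomorphicToPower.

Lemma morphim_quotient_isog (aT rT : finGroupType) (H N : {group aT})
    (f : {morphism H >-> rT}) :
  N <| H -> f @* H / f @* N \isog (H / N) / ('ker f / N).
Proof.
move=> nsN; have nsK := ker_normal f; have nsNK := normalY nsN nsK.
have nKN : 'ker f \subset 'N(N).
  exact: subset_trans (normal_sub nsK) (normal_norm nsN).
rewrite -(quotientYidl nKN) isog_sym.
apply: isog_trans (third_isog (joing_subl N _) nsN nsNK) _.
have <- : f @* (N <*> 'ker f) = f @* N.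
  by rewrite morphimY ?normal_sub // morphim_ker joingG1.
apply/isogP; exists (quotm_morphism f nsNK); last by rewrite morphim_quotm.
rewrite ker_quotm quotient_sub1 ?joing_subr //.
exact: subset_trans (normal_sub nsK) (normal_norm nsNK).
Qed.

Lemma card_quotient_trivgI (gT : finGroupType) (Q A B : {group gT}) :
  A <| Q -> B <| Q -> A :&: B = 1 -> (#|Q| <= #|Q / A| * #|Q / B|)%N.
Proof.
move=> nsA nsB tiAB.
have cardQ (C : {group gT}) : C <| Q -> #|Q| = (#|Q / C| * #|C|)%N.
  move=> nsC; rewrite -(Lagrange (normal_sub nsC)) mulnC.
  by rewrite card_quotient ?normal_norm.
have leAB : (#|A| * #|B| <= #|Q|)%N.
  by rewrite mul_cardG tiAB cards1 muln1 subset_leq_card // mul_subG ?normal_sub.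
rewrite -(leq_pmul2r (cardG_gt0 Q)) {1}(cardQ _ nsA) {1}(cardQ _ nsB).
by rewrite mulnACA leq_mul2l leAB orbT.
Qed.

Lemma ker_fst_cent_ker_snd (gT1 gT2 : finGroupType) :
  'ker (@fst_morphism gT1 gT2) \subset 'C('ker (@snd_morphism gT1 gT2)).
Proof.
apply/centsP => -[a b] /mker/= -> [c d] /mker/= ->.
by rewrite /commute; congr (_, _); rewrite /= ?mulg1 ?mul1g.
Qed.

Lemma card_setXn_const (I : finType) (gT : finGroupType) (T : {set gT}) :
  #|setXn (fun _ : I => T)| = (#|T| ^ #|I|)%N.
Proof. by rewrite cardsXn prod_nat_const. Qed.

Theorem lemma2p5 (gT1 gT2 gT : finGroupType)
  (H1 : {group gT1}) (H2 : {group gT2}) (H N : {group (gT1 * gT2)%type})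
  (T : {group gT}) (l : nat) :
  H \subset setX H1 H2 ->
  (@fst_morphism gT1 gT2) @* H = H1 ->
  (@snd_morphism gT1 gT2) @* H = H2 ->
  N <| H -> solvable N ->
  simple T -> ~~ abelian T -> (0 < l)%N ->
  H / N \isog setXn (fun _ : 'I_l => T) ->
  exists l1 l2 : nat,
    [/\ (l <= l1 + l2)%N,
        H1 / ((@fst_morphism gT1 gT2) @* N) \isog setXn (fun _ : 'I_l1 => T) &
        H2 / ((@snd_morphism gT1 gT2) @* N) \isog setXn (fun _ : 'I_l2 => T)].
Proof.
move=> _ fstH sndH nsN _ simT nabT _ isoHN.
have restrmE (rT : finGroupType) (f : {morphism [set: gT1 * gT2] >-> rT})
    (G : {group _}) : G \subset H -> restrm (subsetT H) f @* G = f @* G.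
  by move=> sGH; rewrite morphim_restrm (setIidPr sGH).
pose f1 := restrm (subsetT H) (@fst_morphism gT1 gT2).
pose f2 := restrm (subsetT H) (@snd_morphism gT1 gT2).
have nsK1 : 'ker f1 / N <| H / N := quotient_normal N (ker_normal f1).
have nsK2 : 'ker f2 / N <| H / N := quotient_normal N (ker_normal f2).
have [k1 iso1] := quotient_isog_power simT nabT isoHN nsK1.
have [k2 iso2] := quotient_isog_power simT nabT isoHN nsK2.
exists k1, k2; split; last 2 first.
- rewrite -fstH -!restrmE ?normal_sub //.
  exact: isog_trans (morphim_quotient_isog f1 nsN) iso1.
- rewrite -sndH -!restrmE ?normal_sub //.
  exact: isog_trans (morphim_quotient_isog f2 nsN) iso2.
have cK12 : 'ker f1 / N \subset 'C('ker f2 / N).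
  apply: quotient_cents; rewrite !ker_restrm.
  apply: subset_trans (subsetIr _ _) (subset_trans (ker_fst_cent_ker_snd _ _) _).
  exact/centS/subsetIr.
have tiK12 : 'ker f1 / N :&: 'ker f2 / N = 1.
  apply: (abelian_normal_isog_power simT nabT isoHN (normalI nsK1 nsK2)).
  exact: subset_trans (subsetIl _ _) (subset_trans cK12 (centS (subsetIr _ _))).
have := card_quotient_trivgI nsK1 nsK2 tiK12.
rewrite (card_isog isoHN) (card_isog iso1) (card_isog iso2) !card_setXn_const.
by rewrite !card_ord -expnD leq_exp2l // cardG_gt1; case/simpleP: simT.
Qed.
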